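(* Let $T$ be a decomposition tree of a distance-hereditary graph $G$ and let $v$ be an internal node of $T$. Then $|\hat\gamma_k(v)-\hat\gamma_{k+1}(v)|=1$ for every integer $0\le k<|\hat{TS}(v)|$.
   Context: All graphs are finite, simple, undirected. For a graph $H$ and $S\subseteq V(H)$, $N_H[S]$ is $S$ together with all vertices adjacent to a vertex of $S$, and $H[S]$ is the induced subgraph. Graphs carry a ''twin set'': a single-vertex graph on $x$ has twin set $\{x\}$. For vertex-disjoint graphs $G_l,G_r$ with twin sets $TS(G_l),TS(G_r)$: the true twin operation $G_l\otimes G_r$ has vertex set $V(G_l)\cup V(G_r)$, edge set $E(G_l)\cup E(G_r)\cup\{uw: u\in TS(G_l), w\in TS(G_r)\}$ and twin set $TS(G_l)\cup TS(G_r)$; the false twin operation $G_l\odot G_r$ has vertex set $V(G_l)\cup V(G_r)$, edge set $E(G_l)\cup E(G_r)$, twin set $TS(G_l)\cup TS(G_r)$; the attachment operation $G_l\oplus G_r$ has the same vertex and edge sets as $G_l\otimes G_r$ and twin set $TS(G_l)$. A decomposition tree $T$ of $G$ is a rooted binary tree whose leaves are in bijection with $V(G)$, each internal node having a left and a right child and a label in $\{\otimes,\odot,\oplus\}$; for each node $v$ define $\hat G(v)$ and $\hat{TS}(v)$ recursively: for a leaf $x$, the single-vertex graph on $x$ with twin set $\{x\}$; for an internal node $v$ with label $\circ$ and children $v_l,v_r$, $\hat G(v)=\hat G(v_l)\circ\hat G(v_r)$ with the corresponding twin set; one requires $\hat G(\text{root})=G$. Then $\hat G(v)$ is the subgraph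 of $G$ induced by the set $\hat V(v)$ of leaves below $v$. For a node $v$ and $0\le k\le|\hat{TS}(v)|$, call $S\subseteq\hat V(v)$ $k$-feasible if $\hat V(v)\setminus\hat{TS}(v)\subseteq N_{\hat G(v)}[S]$ and there is $X\subseteq S\cap\hat{TS}(v)$ with $|X|=k$ such that $\hat G(v)[S\setminus X]$ has a perfect matching. $\hat\gamma_k(v)$ is the minimum size of a $k$-feasible set. *)

From mathcomp Require Import all_boot all_order.
Set Implicit Arguments. Unset Strict Implicit. Unset Printing Implicit Defensive.

Section DH.
Variable V : finType.

Definition simple_graph (e : rel V) : Prop :=
  (forall x y, e x y = e y x) /\ (forall x, e x x = false).

(* reach e S n x y : there is a walk of length <= n from x to y in e whose
   vertices after x lie in S (for x in S: dist_{G[S]}(x,y) <= n). *)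
Fixpoint reach (e : rel V) (S : {set V}) (n : nat) (x y : V) : bool :=
  match n with
  | 0 => x == y
  | n'.+1 => reach e S n' x y || [exists z in S, reach e S n' x z && e z y && (y \in S)]
  end.

Definition induced_connected (e : rel V) (S : {set V}) : Prop :=
  forall x y, x \in S -> y \in S -> exists n, reach e S n x y.

(* distance-hereditary: in every connected induced subgraph, distances equal
   those in G (d_{G[S]} >= d_G always holds, so we require <=). *)
Definition distance_hereditary (e : rel V) : Prop :=
  forall S : {set V}, induced_connected e S ->
    forall x y, x \in S -> y \in S ->
      forall n, reach e setT n x y -> reach e S n x y.

Inductive dop := TrueTwin | FalseTwin | Attach.

Definition dop_eqb (a b : dop) : bool :=
  match a, b with
  | TrueTwin, TrueTwin | FalseTwin, FalseTwin | Attach, Attach => true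
  | _, _ => false
  end.

Inductive dtree :=
  | Leaf of V
  | Node of dop & dtree & dtree.

Fixpoint leaves (t : dtree) : seq V :=
  match t with Leaf x => [:: x] | Node _ l r => leaves l ++ leaves r end.

Definition tverts (t : dtree) : {set V} := [set x in leaves t].

(* \hat TS(v) *)
Fixpoint tTS (t : dtree) : {set V} :=
  match t with
  | Leaf x => [set x]
  | Node TrueTwin l r => tTS l :|: tTS r
  | Node FalseTwin l r => tTS l :|: tTS r
  | Node Attach l _ => tTS l
  end.

(* edge relation of \hat G(v) *)
Fixpoint tedge (t : dtree) : rel V :=
  match t with
  | Leaf _ => fun _ _ => false
  | Node o l r => fun u w =>
      [|| tedge l u w, tedge r u w |
          ~~ dop_eqb o FalseTwin &&
          (((u \in tTS l) && (w \in tTS r)) || ((w \in tTS l) && (u \in tTS r)))]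
  end.

Definition decomposition_tree (e : rel V) (T : dtree) : Prop :=
  uniq (leaves T) /\ (forall x, x \in leaves T) /\ (forall u w, e u w = tedge T u w).

(* v is a node of T (a subtree rooted at a node) *)
Fixpoint is_node (v T : dtree) : Prop :=
  v = T \/ match T with Leaf _ => False | Node _ l r => is_node v l \/ is_node v r end.

Definition internal (v : dtree) : bool := if v is Node _ _ _ then true else false.

Definition cnbh (t : dtree) (S : {set V}) : {set V} :=
  [set x in tverts t | (x \in S) || [exists y in S, tedge t y x]].

Definition has_perfect_matching (e : rel V) (W : {set V}) : Prop :=
  exists M : {set {set V}}, partition M W /\
    forall m, m \in M -> exists u w, [/\ m = [set u; w], u != w & e u w].

Definition k_feasible (t : dtree) (k : nat) (S : {set V}) : Prop :=
  S \subset tverts t /\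
  (tverts t :\: tTS t) \subset cnbh t S /\
  exists X : {set V}, [/\ X \subset S :&: tTS t, #|X| = k &
                          has_perfect_matching (tedge t) (S :\: X)].

(* m = \hat\gamma_k(v): the minimum size of a k-feasible set *)
Definition is_gamma (t : dtree) (k m : nat) : Prop :=
  (exists S, k_feasible t k S /\ #|S| = m) /\
  (forall S, k_feasible t k S -> m <= #|S|).

End DH.

From mathcomp Require Import all_boot all_order.
From Stdlib Require Import Classical_Prop.
From Stdlib Require Wf_nat.
Set Implicit Arguments. Unset Strict Implicit. Unset Printing Implicit Defensive.

(* A k-feasible set has the parity of k, being X plus a perfectly matched set.
   Moving one vertex between X and the matched part leaves one vertex y without
   partner: y is matched to a neighbour outside S if it has one, and otherwise
   dropped from S, which keeps the domination since all neighbours of y lie in S.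
   Hence gamma_(k+1) <= gamma_k + 1 and gamma_k <= gamma_(k+1) + 1, and the
   parities exclude equality.  A maximal matching together with the unmatched
   twins is feasible, so every gamma_k is attained. *)

Lemma ex_least_nat (P : nat -> Prop) :
  (exists n, P n) -> exists n, P n /\ forall m, P m -> n <= m.
Proof.
move=> exP.
have [n [[Pn least_n] _]] :=
  Wf_nat.dec_inh_nat_subset_has_unique_least_element P (fun n => classic (P n)) exP.
by exists n; split=> // m /least_n /leP.
Qed.

Lemma nat_interval_ind (P : nat -> Prop) (n k0 : nat) :
  (forall k, k < n -> P k -> P k.+1) -> (forall k, P k.+1 -> P k) ->
  k0 <= n -> P k0 -> forall k, k <= n -> P k.
Proof.
move=> up down k0n Pk0.
have {k0n Pk0} : P n.
  elim: n up k0n => [|n IHn] up; first by rewrite leqn0 => /eqP <-.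
  rewrite leq_eqVlt => /orP [/eqP <- //|k0n].
  apply: (up n) => //; apply: IHn => // k kn.
  exact: (up k (ltnW kn)).
elim: n {up} => [|n IHn] Pn k; first by rewrite leqn0 => /eqP ->.
by rewrite leq_eqVlt => /orP [/eqP -> //|kn]; apply: IHn (down _ Pn) _ kn.
Qed.

Section PerfectMatching.
Variables (V : finType) (ed : rel V).

Lemma perfect_matching0 : has_perfect_matching ed set0.
Proof. by exists set0; split=> [|m]; rewrite ?partition_set0 ?inE. Qed.

Lemma perfect_matchingU2 (W : {set V}) x y :
  has_perfect_matching ed W -> x \notin W -> y \notin W -> x != y -> ed x y ->
  has_perfect_matching ed ([set x; y] :|: W).
Proof.
move=> [M [partM edgeM]] xW yW xy exy.
exists ([set x; y] |: M); split.
  apply: partitionU1 => //; first by apply/set0Pn; exists x; rewrite !inE eqxx.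
  by rewrite disjoints_subset subUset !sub1set !inE xW yW.
by move=> m; rewrite !inE => /orP [/eqP ->|/edgeM //]; exists x, y.
Qed.

Lemma perfect_matching_even (W : {set V}) : has_perfect_matching ed W -> ~~ odd #|W|.
Proof.
move=> [M [partM edgeM]]; rewrite (card_partition partM).
rewrite (eq_bigr (fun _ => 2)) ?sum_nat_const ?oddM ?andbF //.
by move=> m /edgeM [u [w [-> uw _]]]; rewrite cards2 uw.
Qed.

Hypothesis ed_sym : forall x y, ed x y = ed y x.

Lemma perfect_matching_partner (W : {set V}) t : has_perfect_matching ed W -> t \in W ->
  exists u, [/\ u \in W, u != t, ed t u & has_perfect_matching ed (W :\: [set t; u])].
Proof.
move=> [M [partM edgeM]] tW.
have coverM : cover M = W by apply/eqP; case/and3P: partM.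
have blockM : pblock M t \in M by rewrite pblock_mem ?coverM.
have t_block : t \in pblock M t by rewrite mem_pblock coverM.
have pmD : has_perfect_matching ed (W :\: pblock M t).
  exists (M :\ pblock M t); split; first exact: partitionD1.
  by move=> m /setD1P [_ /edgeM].
have blockW : pblock M t \subset W by apply: partitionS partM blockM.
have [a [b [ab_block ab eab]]] := edgeM _ blockM.
rewrite ab_block in blockW pmD.
have [aW bW] : a \in W /\ b \in W by rewrite !(subsetP blockW) ?set21 ?set22.
move: t_block; rewrite ab_block => /set2P [->|->].
  by exists b; split; rewrite // eq_sym.
by exists a; split => //; [rewrite ed_sym | rewrite setUC].
Qed.

End PerfectMatching.

Section Feasibility.
Variables (V : finType) (ed : rel V) (A B : {set V}).
Hypothesis ed_sym : forall x y, ed x y = ed y x.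
Hypothesis ed_irr : forall x, ed x x = false.
Hypothesis ed_in : forall x y, ed x y -> x \in A.
Hypothesis subBA : B \subset A.
Hypothesis nonisolated : forall y, y \in A -> y \notin B -> exists z, ed z y.

Definition closed_nbhd (S : {set V}) : {set V} :=
  [set x in A | (x \in S) || [exists y in S, ed y x]].

(* [feasible] and [min_feasible] unfold to [k_feasible v] and [is_gamma v] for
   [ed, A, B := tedge v, tverts v, tTS v]. *)
Definition feasible (k : nat) (S : {set V}) : Prop :=
  S \subset A /\ A :\: B \subset closed_nbhd S /\
  exists X : {set V}, [/\ X \subset S :&: B, #|X| = k &
                          has_perfect_matching ed (S :\: X)].

Definition min_feasible (k m : nat) : Prop :=
  (exists S, feasible k S /\ #|S| = m) /\ (forall S, feasible k S -> m <= #|S|).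

Lemma ed_in_r x y : ed x y -> y \in A.
Proof. by rewrite ed_sym; apply: ed_in. Qed.

Lemma closed_nbhdS (S S' : {set V}) : S \subset S' -> closed_nbhd S \subset closed_nbhd S'.
Proof.
move=> sSS'; apply/subsetP => x; rewrite !inE => /andP [-> /orP [xS|]] /=.
  by rewrite (subsetP sSS').
case/existsP => y /andP [yS eyx]; apply/orP; right.
by apply/existsP; exists y; rewrite (subsetP sSS').
Qed.

Lemma closed_nbhdD1 (S : {set V}) u x : x != u -> (forall w, ed u w -> w \in S) ->
  x \in closed_nbhd S -> x \in closed_nbhd (S :\ u).
Proof.
move=> xu Nu; rewrite !inE xu /= => /andP [-> /orP [-> //|]] /=.
case/existsP => y /andP [yS eyx]; case: (eqVneq y u) => [yu|yu].
  by rewrite Nu // -yu.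
by apply/orP; right; apply/existsP; exists y; rewrite !inE yu yS.
Qed.

Lemma feasible_odd k (S : {set V}) : feasible k S -> odd #|S| = odd k.
Proof.
move=> [_ [_ [X [XSB <- pmW]]]].
have XS : X \subset S := subset_trans XSB (subsetIl _ _).
rewrite -(cardsID X S) (setIidPr XS) oddD.
by rewrite (negbTE (perfect_matching_even pmW)) addbF.
Qed.

Lemma feasible_rematch (S X : {set V}) y :
  S \subset A -> A :\: B \subset closed_nbhd S -> X \subset S :&: B ->
  y \in S -> y \notin X -> has_perfect_matching ed ((S :\: X) :\ y) ->
  y \in B \/ (exists2 z, z \in S :\ y & ed z y) ->
  exists S', feasible #|X| S' /\ #|S'| <= #|S|.+1.
Proof.
move=> SA domS XSB yS yX pmW ydom.
case: (boolP [exists w, (w \notin S) && ed y w]) => [|/existsPn Ny].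
  case/existsP => w /andP [wS eyw]; exists (w |: S).
  split; last by rewrite cardsU1 wS.
  split; first by rewrite subUset sub1set SA (ed_in_r eyw).
  split; first exact: subset_trans domS (closed_nbhdS (subsetUr _ _)).
  exists X; split => //; first exact: subset_trans XSB (setSI _ (subsetUr _ _)).
  have XS : X \subset S := subset_trans XSB (subsetIl _ _).
  have -> : (w |: S) :\: X = [set y; w] :|: ((S :\: X) :\ y).
    apply/setP => z; rewrite !inE.
    case: (eqVneq z y) => [->|_]; first by rewrite yX yS orbT.
    case: (eqVneq z w) => [->|_] //=; rewrite andbT.
    by apply: contraNN wS => /(subsetP XS).
  apply: perfect_matchingU2 => //; first by rewrite !inE eqxx.
    by rewrite !inE (negbTE wS) !andbF.
  by apply: contraNneq wS => <-.
exists (S :\ y); split; last first.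
  exact: leq_trans (subset_leq_card (subsetDl _ _)) (leqnSn _).
split; first exact: subset_trans (subsetDl _ _) SA.
split.
  apply/subsetP => x xAB; case: (eqVneq x y) => [xy|xy].
    case: ydom => [yB|[z zS ezy]]; first by move: xAB; rewrite !inE xy yB.
    rewrite xy inE (ed_in_r ezy) /=.
    by apply/orP; right; apply/existsP; exists z; rewrite zS.
  apply: closed_nbhdD1 xy _ (subsetP domS x xAB) => w eyw.
  by apply: contraNT (Ny w) => wS; rewrite wS eyw.
exists X; split => //; last by rewrite setDDl setUC -setDDl.
apply/subsetP => x xX; have := subsetP XSB x xX.
rewrite !inE => /andP [-> ->]; rewrite !andbT.
by apply: contraNneq yX => <-.
Qed.

Lemma feasible_pred k (S : {set V}) : feasible k.+1 S ->
  exists S', feasible k S' /\ #|S'| <= #|S|.+1.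
Proof.
move=> [SA [domS [X [XSB cardX pmW]]]].
have [x xX] : exists x, x \in X by apply/set0Pn; rewrite -card_gt0 cardX.
have /setIP [xS xB] := subsetP XSB x xX.
have <- : #|X :\ x| = k by move: cardX; rewrite (cardsD1 x) xX => -[].
apply: (feasible_rematch SA domS _ xS); last by left.
- exact: subset_trans (subsetDl _ _) XSB.
- by rewrite !inE eqxx.
- by rewrite setDDl setUC setD1K.
Qed.

Lemma feasible_succ k (S : {set V}) : feasible k S -> k < #|B| ->
  exists S', feasible k.+1 S' /\ #|S'| <= #|S|.+1.
Proof.
move=> [SA [domS [X [XSB cardX pmW]]]] kB.
have XS : X \subset S := subset_trans XSB (subsetIl _ _).
have [t tB tX] : exists2 t, t \in B & t \notin X.
  by apply/subsetPn; apply: contraTN kB => /subset_leq_card; rewrite cardX leqNgt.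
have cardtX : #|t |: X| = k.+1 by rewrite cardsU1 tX cardX.
case: (boolP (t \in S)) => tS; last first.
  exists (t |: S); split; last by rewrite cardsU1 tS.
  split; first by rewrite subUset sub1set (subsetP subBA) ?SA.
  split; first exact: subset_trans domS (closed_nbhdS (subsetUr _ _)).
  exists (t |: X); split => //.
    rewrite subUset sub1set !inE eqxx tB.
    exact: subset_trans XSB (setSI _ (subsetUr _ _)).
  suff -> : (t |: S) :\: (t |: X) = S :\: X by [].
  apply/setP => z; rewrite !inE; case: (eqVneq z t) => [->|] //=.
  by rewrite (negbTE tS) andbF.
have tW : t \in S :\: X by rewrite inE tX tS.
have [u [uW ut etu pmW']] := perfect_matching_partner ed_sym pmW tW.
have /setDP [uS uX] := uW.
rewrite -cardtX; apply: (feasible_rematch SA domS _ uS).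
- by rewrite subUset sub1set !inE tS tB XSB.
- by rewrite !inE negb_or ut uX.
- by rewrite !setDDl setUAC setUC -setDDl.
- by right; exists t; rewrite // !inE eq_sym ut tS.
Qed.

Lemma maximal_matching_exists : exists W : {set V},
  [/\ W \subset A, has_perfect_matching ed W &
      forall a b, a \in A :\: W -> b \in A :\: W -> ~~ ed a b].
Proof.
pose P n := exists W : {set V},
  [/\ W \subset A, has_perfect_matching ed W & #|A :\: W| = n].
have P0 : P #|A :\: set0|.
  by exists set0; split; [apply: sub0set | apply: perfect_matching0 |].
have [_ [[W [WA pmW <-]] leastW]] := ex_least_nat (ex_intro P _ P0).
exists W; split=> // a b /setDP [aA aW] /setDP [bA bW]; apply/negP => eab.
have ab : a != b by apply: contraTneq eab => ->; rewrite ed_irr.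
have /leastW : P #|A :\: ([set a; b] :|: W)|.
  exists ([set a; b] :|: W); split=> //; last exact: perfect_matchingU2.
  by rewrite !subUset !sub1set aA bA WA.
apply/negP; rewrite -ltnNge; apply: proper_card; apply/properP; split.
  exact/setDS/subsetUr.
by exists a; rewrite !inE ?eqxx ?aA ?aW.
Qed.

Lemma feasible_exists : exists k S, k <= #|B| /\ feasible k S.
Proof.
have [W [WA pmW indep]] := maximal_matching_exists.
exists #|B :\: W|, (W :|: (B :\: W)); split; first exact/subset_leq_card/subsetDl.
split; first by rewrite subUset WA (subset_trans (subsetDl _ _) subBA).
split.
  apply/subsetP => y /setDP [yA yB]; rewrite inE yA /=.
  have [yW|yW] := boolP (y \in W); first by rewrite inE yW.
  have [z ezy] := nonisolated yA yB.
  apply/orP; right; apply/existsP; exists z; rewrite ezy andbT inE.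
  apply/orP; left; apply: contraT => zW.
  by have := indep z y; rewrite !inE zW yW yA (ed_in ezy) ezy => /(_ isT isT).
exists (B :\: W); split => //; first by rewrite subsetI subsetUr subsetDl.
suff -> : (W :|: (B :\: W)) :\: (B :\: W) = W by [].
by apply/setP => z; rewrite !inE; case: (z \in W); case: (z \in B).
Qed.

Lemma feasible_all k : k <= #|B| -> exists S, feasible k S.
Proof.
have [k0 [S0 [k0B fS0]]] := feasible_exists.
apply: (@nat_interval_ind (fun j => exists S, feasible j S) #|B| k0) => //.
- by move=> j jB [S /feasible_succ /(_ jB) [S' [fS' _]]]; exists S'.
- by move=> j [S /feasible_pred [S' [fS' _]]]; exists S'.
- by exists S0.
Qed.

Lemma min_feasible_exists k : k <= #|B| -> exists m, min_feasible k m.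
Proof.
move=> /feasible_all [S fS].
pose P m := exists S, feasible k S /\ #|S| = m.
have PS : P #|S| by exists S.
have [m [Pm least_m]] := ex_least_nat (ex_intro P _ PS).
by exists m; split => // S' fS'; apply: least_m; exists S'.
Qed.

Lemma min_feasible_succ k : k < #|B| ->
  exists a b, [/\ min_feasible k a, min_feasible k.+1 b & (a = b.+1 \/ b = a.+1)].
Proof.
move=> kB.
have [a amin] := min_feasible_exists (ltnW kB).
have [b bmin] := min_feasible_exists kB.
exists a, b; split => //.
have [[Sa [fSa <-]] leSa] := amin; have [[Sb [fSb <-]] leSb] := bmin.
have [S1 [fS1 cardS1]] := feasible_succ fSa kB.
have [S2 [fS2 cardS2]] := feasible_pred fSb.
have b_le := leq_trans (leSb _ fS1) cardS1.
have a_le := leq_trans (leSa _ fS2) cardS2.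
have parity : odd #|Sb| = ~~ odd #|Sa| by rewrite (feasible_odd fSa) (feasible_odd fSb).
case: (ltngtP #|Sa| #|Sb|) => [ab|ba|ab].
- by right; apply/eqP; rewrite eqn_leq b_le ab.
- by left; apply/eqP; rewrite eqn_leq a_le ba.
- by move: parity; rewrite ab; case: (odd _).
Qed.

End Feasibility.

Section DecompositionTree.
Variable V : finType.
Implicit Types t : dtree V.

Lemma tverts_Node o (l r : dtree V) : tverts (Node o l r) = tverts l :|: tverts r.
Proof. by apply/setP => x; rewrite !inE mem_cat. Qed.

Lemma tTS_Node_l o (l r : dtree V) x : x \in tTS l -> x \in tTS (Node o l r).
Proof. by case: o => /=; rewrite ?in_setU => ->. Qed.

Lemma tTS_subset t : tTS t \subset tverts t.
Proof.
elim: t => [x|o l IHl r IHr]; first by rewrite sub1set !inE.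
rewrite tverts_Node; case: o => /=; last exact: subset_trans IHl (subsetUl _ _).
- exact: setUSS.
- exact: setUSS.
Qed.

Lemma tTS_nonempty t : exists x, x \in tTS t.
Proof.
elim: t => [x|o l [x xl] r _]; first by exists x; rewrite inE.
by exists x; apply: tTS_Node_l.
Qed.

Lemma tedge_sym t x y : tedge t x y = tedge t y x.
Proof.
elim: t x y => [//|o l IHl r IHr] x y /=.
by rewrite IHl IHr [(y \in tTS l) && _ || _]orbC.
Qed.

Lemma tedge_tverts t x y : tedge t x y -> x \in tverts t.
Proof.
elim: t x y => [//|o l IHl r IHr] x y /=; rewrite tverts_Node inE.
case/or3P => [/IHl -> //|/IHr -> |/andP [_ /orP [/andP [xl _]|/andP [_ xr]]]].
- by rewrite orbT.
- by rewrite (subsetP (tTS_subset l)).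
- by rewrite (subsetP (tTS_subset r)) ?orbT.
Qed.

Lemma tedge_nonisolated t y : y \in tverts t -> y \notin tTS t -> exists x, tedge t x y.
Proof.
elim: t y => [x|o l IHl r IHr] y; first by rewrite !inE => ->.
rewrite tverts_Node inE => /orP [yl|yr] yTS.
  have yTSl : y \notin tTS l by apply: contraNN yTS; apply: tTS_Node_l.
  by have [x exy] := IHl _ yl yTSl; exists x; rewrite /= exy.
have [yTSr|yTSr] := boolP (y \in tTS r); last first.
  by have [x exy] := IHr _ yr yTSr; exists x; rewrite /= exy orbT.
have [x xTSl] := tTS_nonempty l.
move: yTS; case: o => /=; rewrite ?inE ?yTSr ?orbT // => _.
by exists x; rewrite /= xTSl !orbT.
Qed.

Lemma tedge_subtree (v T : dtree V) x y : is_node v T -> tedge v x y -> tedge T x y.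
Proof.
elim: T => [z|o l IHl r IHr] /=; first by case=> [->|[]].
by case=> [->//|[/IHl|/IHr] exy /exy ->]; rewrite ?orbT.
Qed.

End DecompositionTree.

Theorem lemma4 (V : finType) (e : rel V) (T v : dtree V) (k : nat) :
  simple_graph e -> distance_hereditary e -> decomposition_tree e T ->
  is_node v T -> internal v -> k < #|tTS v| ->
  exists a b : nat, [/\ is_gamma v k a, is_gamma v k.+1 b & (a = b.+1 \/ b = a.+1)].
Proof.
move=> [_ e_irr] _ [_ [_ eT]] vT _.
have tedge_irr x : tedge v x x = false.
  by apply/negP => /(tedge_subtree vT); rewrite -eT e_irr.
exact: (min_feasible_succ (@tedge_sym V v) tedge_irr (@tedge_tverts V v)
          (tTS_subset v) (@tedge_nonisolated V v)).
Qed.
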